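(* Let $T=(A_1;A_2;\dots;A_p)$ be an $n\times p\times n$ quaternion tensor whose first frontal slice $A_1\in M_n(\mathbb{H})$ is invertible. Then $\mathrm{rank}(T)=n$ if and only if the matrices $A_jA_1^{-1}$, $j=2,\dots,p$, are simultaneously diagonalizable, i.e. there is an invertible $P\in M_n(\mathbb{H})$ such that $P^{-1}A_jA_1^{-1}P$ is a diagonal (quaternion) matrix for every $j=2,\dots,p$.
   Context: $\mathbb{H}$ denotes the real quaternions. An $n_1\times n_2\times n_3$ quaternion tensor is an array $T=(T_{ijk})$ with entries in $\mathbb{H}$, $1\le i\le n_1$, $1\le j\le n_2$, $1\le k\le n_3$; it is written $T=(A_1;\dots;A_{n_2})$ where the frontal slice $A_j$ is the $n_1\times n_3$ matrix $(T_{ijk})_{i,k}$. A nonzero tensor is simple if $T_{ijk}=a_ib_jc_k$ (quaternion product in this order) for some $\vec a\in\mathbb{H}^{n_1},\vec b\in\mathbb{H}^{n_2},\vec c\in\mathbb{H}^{n_3}$. The rank of $T$ is the least number of simple tensors summing to $T$. *)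

(* real quaternions over an abstract realType R
   (any realType is a complete archimedean ordered field, i.e. a copy of the reals). *)
From HB Require Import structures.
From mathcomp Require Import all_boot all_order all_algebra.
From mathcomp Require Import reals.
From mathcomp Require Import ring.
Set Implicit Arguments. Unset Strict Implicit. Unset Printing Implicit Defensive.
Import Order.TTheory GRing.Theory Num.Theory.
Local Open Scope ring_scope.

Section Quaternions.
Variable R : realType.

(* q = q0 + q1 i + q2 j + q3 k *)
Record quat := Quat { q0 : R; q1 : R; q2 : R; q3 : R }.

Definition quat_to (q : quat) : R * R * R * R := (q0 q, q1 q, q2 q, q3 q).
Definition quat_of (t : R * R * R * R) : quat :=
  let: (a, b, c, d) := t in Quat a b c d.
Lemma quat_toK : cancel quat_to quat_of. Proof. by case. Qed.

HB.instance Definition _ := Equality.copy quat (can_type quat_toK).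
HB.instance Definition _ := Choice.copy quat (can_type quat_toK).

Definition qzero := Quat 0 0 0 0.
Definition qone := Quat 1 0 0 0.
Definition qadd (p q : quat) :=
  Quat (q0 p + q0 q) (q1 p + q1 q) (q2 p + q2 q) (q3 p + q3 q).
Definition qopp (p : quat) := Quat (- q0 p) (- q1 p) (- q2 p) (- q3 p).
(* Hamilton product: i^2 = j^2 = k^2 = ijk = -1 *)
Definition qmul (p q : quat) :=
  Quat (q0 p * q0 q - q1 p * q1 q - q2 p * q2 q - q3 p * q3 q)
       (q0 p * q1 q + q1 p * q0 q + q2 p * q3 q - q3 p * q2 q)
       (q0 p * q2 q - q1 p * q3 q + q2 p * q0 q + q3 p * q1 q)
       (q0 p * q3 q + q1 p * q2 q - q2 p * q1 q + q3 p * q0 q).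

Lemma qaddA : associative qadd.
Proof. by move=> [? ? ? ?] [? ? ? ?] [? ? ? ?]; rewrite /qadd /=; congr Quat; ring. Qed.
Lemma qaddC : commutative qadd.
Proof. by move=> [? ? ? ?] [? ? ? ?]; rewrite /qadd /=; congr Quat; ring. Qed.
Lemma qadd0 : left_id qzero qadd.
Proof. by move=> [? ? ? ?]; rewrite /qadd /=; congr Quat; ring. Qed.
Lemma qaddN : left_inverse qzero qopp qadd.
Proof. by move=> [? ? ? ?]; rewrite /qadd /=; congr Quat; ring. Qed.

HB.instance Definition _ := GRing.isZmodule.Build quat qaddA qaddC qadd0 qaddN.

Lemma qmulA : associative qmul.
Proof. by move=> [? ? ? ?] [? ? ? ?] [? ? ? ?]; rewrite /qmul /=; congr Quat; ring. Qed.
Lemma qmul1 : left_id qone qmul.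
Proof. by move=> [? ? ? ?]; rewrite /qmul /qone /=; congr Quat; ring. Qed.
Lemma qmulr1 : right_id qone qmul.
Proof. by move=> [? ? ? ?]; rewrite /qmul /qone /=; congr Quat; ring. Qed.
Lemma qmulDl : left_distributive qmul qadd.
Proof.
by move=> [? ? ? ?] [? ? ? ?] [? ? ? ?]; rewrite /qmul /= /qadd /=; congr Quat; ring.
Qed.
Lemma qmulDr : right_distributive qmul qadd.
Proof.
by move=> [? ? ? ?] [? ? ? ?] [? ? ? ?]; rewrite /qmul /= /qadd /=; congr Quat; ring.
Qed.
Lemma qone_neq0 : qone != 0.
Proof. by apply/eqP => -[] /eqP; rewrite oner_eq0. Qed.

HB.instance Definition _ :=
  GRing.Zmodule_isNzRing.Build quat qmulA qmul1 qmulr1 qmulDl qmulDr qone_neq0.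

End Quaternions.

Notation "''H[' R ]" := (quat R) (at level 8, format "''H[' R ]").

Section Tensors.
Variable R : realType.
Local Notation H := (quat R).

Definition tensor (n1 n2 n3 : nat) := 'I_n1 -> 'I_n2 -> 'I_n3 -> H.

Definition simple_tensor n1 n2 n3 (T : tensor n1 n2 n3) : Prop :=
  (exists i j k, T i j k != 0) /\
  exists (a : 'I_n1 -> H) (b : 'I_n2 -> H) (c : 'I_n3 -> H),
    forall i j k, T i j k = a i * b j * c k.

Definition sum_of_simple n1 n2 n3 (T : tensor n1 n2 n3) (r : nat) : Prop :=
  exists S : 'I_r -> tensor n1 n2 n3,
    (forall l, simple_tensor (S l)) /\
    forall i j k, T i j k = \sum_(l < r) S l i j k.

Definition tensor_rank_is n1 n2 n3 (T : tensor n1 n2 n3) (r : nat) : Prop :=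
  sum_of_simple T r /\ forall m, (m < r)%N -> ~ sum_of_simple T m.

Definition frontal_slice n1 n2 n3 (T : tensor n1 n2 n3) (j : 'I_n2) : 'M[H]_(n1, n3) :=
  \matrix_(i < n1, k < n3) T i j k.

Definition mx_inverse_of n (A B : 'M[H]_n) : Prop :=
  A *m B = 1%:M /\ B *m A = 1%:M.

Definition mx_invertible n (A : 'M[H]_n) : Prop := exists B, mx_inverse_of A B.

End Tensors.

From HB Require Import structures.
From mathcomp Require Import all_boot all_order all_algebra.
From mathcomp Require Import reals ring lra.
Import GRing.Theory Num.Theory.
Local Open Scope ring_scope.
Set Implicit Arguments. Unset Strict Implicit.

(* A sum of m simple tensors is exactly a family of slices A_j = X D_j Y with
   X : n x m, Y : m x n and D_j diagonal (column l of X, diagonal entry l of D_j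
   and row l of Y hold the three factors of the l-th simple tensor).
   - If rank T = n, write A_j = X D_j Y; then P = X is invertible with inverse
     D_1 Y A_1^{-1}, and P^{-1} A_j A_1^{-1} P = D_j M where M D_1 = 1, so M is
     diagonal because quaternions have no zero divisors.
   - Conversely A_j = P D_j (P^{-1} A_1) with D_1 = 1 exhibits T as a sum of n
     simple tensors, and no sum of m < n simple tensors exists since A_1 = X D_1 Y
     would give an n x m matrix with a right inverse.
   The last point and "one-sided inverses are two-sided" need a rank argument;
   we obtain it by embedding quaternion matrices into real matrices through the
   left regular representation of the quaternions. *)

Section MatrixRingFacts.
Variable K : nzRingType.

Lemma col_neq0_of_left_inverse n m (A : 'M[K]_(n, m)) (B : 'M[K]_(m, n)) l :
  B *m A = 1%:M -> exists i, A i l != 0.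
Proof.
move=> hBA; apply/existsP; apply: contraT => /existsPn hA.
move/matrixP: hBA => /(_ l l); rewrite !mxE eqxx big1 => [/eqP|i _].
  by rewrite eq_sym oner_eq0.
by move: (hA i); rewrite negbK => /eqP ->; rewrite mulr0.
Qed.

Lemma row_neq0_of_right_inverse n m (A : 'M[K]_(m, n)) (B : 'M[K]_(n, m)) l :
  A *m B = 1%:M -> exists k, A l k != 0.
Proof.
move=> hAB; apply/existsP; apply: contraT => /existsPn hA.
move/matrixP: hAB => /(_ l l); rewrite !mxE eqxx big1 => [/eqP|k _].
  by rewrite eq_sym oner_eq0.
by move: (hA k); rewrite negbK => /eqP ->; rewrite mul0r.
Qed.

Lemma diag_mx_of_diag n (D : 'M[K]_n) :
  is_diag_mx D -> D = diag_mx (\row_l D l l).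
Proof.
move=> /is_diag_mxP hD; apply/matrixP => i k; rewrite !mxE.
by case: (eqVneq i k) => [->|ik]; rewrite ?mulr1n // hD ?mulr0n.
Qed.

Hypothesis K_no_zero_divisors : forall x y : K, x * y = 0 -> x = 0 \/ y = 0.

(* Without zero divisors, M diag(d) = 1 forces M to be diagonal: for i != k
   we have M i k * d k = 0, and d k != 0 because M k k * d k = 1. *)
Lemma is_diag_of_mul_diag_eq1 n (M : 'M[K]_n) (d : 'rV[K]_n) :
  M *m diag_mx d = 1%:M -> is_diag_mx M.
Proof.
move=> hMd; apply/is_diag_mxP => i k ik.
have /matrixP := hMd; rewrite mul_mx_diag => hentry.
have := hentry i k; have := hentry k k.
rewrite !mxE eqxx (negbTE (ik : i != k)) => hkk /K_no_zero_divisors [//|dk0].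
by move/eqP: hkk; rewrite dk0 mulr0 eq_sym oner_eq0.
Qed.

End MatrixRingFacts.

Section QuaternionFacts.
Variable R : realType.
Local Notation H := (quat R).

Lemma qmulE (x y : H) : x * y = qmul x y. Proof. by []. Qed.
Lemma qaddE (x y : H) : x + y = qadd x y. Proof. by []. Qed.

(* The squared Euclidean norm of a quaternion is multiplicative and definite,
   hence quaternions have no zero divisors. *)
Definition qnorm2 (q : H) := q0 q ^+ 2 + q1 q ^+ 2 + q2 q ^+ 2 + q3 q ^+ 2.

Lemma qnorm2M (x y : H) : qnorm2 (x * y) = qnorm2 x * qnorm2 y.
Proof. by rewrite qmulE; case: x y => ? ? ? ? [? ? ? ?]; rewrite /qnorm2 /=; ring. Qed.

Lemma qnorm2_eq0 (x : H) : qnorm2 x = 0 -> x = 0.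
Proof.
case: x => x0 x1 x2 x3; rewrite /qnorm2 /= => h.
have -> : x0 = 0 by nra.
have -> : x1 = 0 by nra.
have -> : x2 = 0 by nra.
by have -> : x3 = 0 by nra.
Qed.

Lemma qmul_eq0 (x y : H) : x * y = 0 -> x = 0 \/ y = 0.
Proof.
move=> hxy; have /eqP : qnorm2 x * qnorm2 y = 0.
  by rewrite -qnorm2M hxy /qnorm2 /=; ring.
by rewrite mulf_eq0 => /orP [/eqP/qnorm2_eq0|/eqP/qnorm2_eq0]; [left|right].
Qed.

(* Left regular representation: qrep q is the real 4 x 4 matrix of y |-> q y
   in the basis 1, i, j, k; its first column is the coordinate vector of q. *)
Definition qrep (q : H) : 'M[R]_4 := \matrix_(a, b)
  match val a, val b with
  | 0, 0 => q0 q | 0, 1 => - q1 q | 0, 2 => - q2 q | 0, _ => - q3 q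
  | 1, 0 => q1 q | 1, 1 => q0 q | 1, 2 => - q3 q | 1, _ => q2 q
  | 2, 0 => q2 q | 2, 1 => q3 q | 2, 2 => q0 q | 2, _ => - q1 q
  | _, 0 => q3 q | _, 1 => - q2 q | _, 2 => q1 q | _, _ => q0 q
  end.

Lemma qrepM (x y : H) : qrep (x * y) = qrep x *m qrep y.
Proof.
apply/matrixP => a b; rewrite !mxE !big_ord_recl big_ord0 !mxE qmulE.
case: x y => x0 x1 x2 x3 [y0 y1 y2 y3].
by case: a => [[|[|[|[|a]]]] ha] //; case: b => [[|[|[|[|b]]]] hb] //=; ring.
Qed.

Lemma qrepD (x y : H) : qrep (x + y) = qrep x + qrep y.
Proof.
apply/matrixP => a b; rewrite !mxE qaddE.
case: x y => x0 x1 x2 x3 [y0 y1 y2 y3].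
by case: a => [[|[|[|[|a]]]] ha] //; case: b => [[|[|[|[|b]]]] hb] //=; ring.
Qed.

Lemma qrep0 : qrep 0 = 0.
Proof.
apply/matrixP => a b; rewrite !mxE.
by case: a => [[|[|[|[|a]]]] ha] //; case: b => [[|[|[|[|b]]]] hb] //=; rewrite oppr0.
Qed.

Lemma qrep1 : qrep 1 = 1%:M.
Proof.
apply/matrixP => a b; rewrite !mxE.
by case: a => [[|[|[|[|a]]]] ha] //; case: b => [[|[|[|[|b]]]] hb] //=; rewrite oppr0.
Qed.

Lemma qrep_inj (x y : H) : (forall a, qrep x a 0 = qrep y a 0) -> x = y.
Proof.
case: x y => x0 x1 x2 x3 [y0 y1 y2 y3] h.
have := h 0; have := h 1; have := h 2%:R; have := h 3%:R.
by rewrite !mxE /= => -> -> -> ->.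
Qed.

(* Quaternion matrices as real matrices, entrywise through qrep; rows and
   columns are indexed by pairs (quaternion index, real coordinate). *)
Definition real_mx n m (A : 'M[H]_(n, m)) :
    'M[R]_(#|{: 'I_n * 'I_4}|, #|{: 'I_m * 'I_4}|) :=
  \matrix_(k, l) qrep (A (enum_val k).1 (enum_val l).1) (enum_val k).2 (enum_val l).2.

Lemma real_mxM n m p (A : 'M[H]_(n, m)) (B : 'M[H]_(m, p)) :
  real_mx (A *m B) = real_mx A *m real_mx B.
Proof.
apply/matrixP => k l; rewrite [LHS]mxE [(A *m B) _ _]mxE (big_morph qrep qrepD qrep0) summxE mxE.
under eq_bigr do rewrite qrepM mxE.
rewrite pair_bigA /= (reindex (@enum_val _ {: 'I_m * 'I_4})) /=.
  by apply: eq_bigr => t _; rewrite !mxE.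
by exists enum_rank => t _; [apply: enum_valK | apply: enum_rankK].
Qed.

Lemma real_mx1 n : real_mx (1%:M : 'M[H]_n) = 1%:M.
Proof.
apply/matrixP => k l; rewrite [LHS]mxE [RHS]mxE [1%:M _ _]mxE -(inj_eq enum_val_inj).
case: (enum_val k) (enum_val l) => i a [j b] /=.
rewrite xpair_eqE; case: (eqVneq i j) => [_|_] /=.
  by rewrite mulr1n qrep1 mxE.
by rewrite mulr0n qrep0 mxE.
Qed.

Lemma real_mx_inj n m : injective (@real_mx n m).
Proof.
move=> A B hAB; apply/matrixP => i j; apply: qrep_inj => a.
move/matrixP: hAB => /(_ (enum_rank (i, a)) (enum_rank (j, 0))).
by rewrite !mxE !enum_rankK.
Qed.

Lemma mulmx1C_quat n (A B : 'M[H]_n) : A *m B = 1%:M -> B *m A = 1%:M.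
Proof.
move=> hAB; apply: real_mx_inj; rewrite real_mxM real_mx1; apply: mulmx1C.
by rewrite -real_mxM hAB real_mx1.
Qed.

Lemma right_inverse_dim n m (X : 'M[H]_(n, m)) (Z : 'M[H]_(m, n)) :
  X *m Z = 1%:M -> (n <= m)%N.
Proof.
move=> hXZ; have := mxrankM_maxl (real_mx X) (real_mx Z).
rewrite -real_mxM hXZ real_mx1 mxrank1 => /leq_trans/(_ (rank_leq_col _)).
by rewrite !card_prod !card_ord leq_pmul2r.
Qed.

End QuaternionFacts.

Section TensorRank.
Variable R : realType.
Local Notation H := (quat R).

Lemma slices_of_sum_of_simple n1 n2 n3 (T : tensor R n1 n2 n3) m :
  sum_of_simple T m ->
  exists (X : 'M[H]_(n1, m)) (d : 'I_n2 -> 'rV[H]_m) (Y : 'M[H]_(m, n3)),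
    forall j, frontal_slice T j = X *m diag_mx (d j) *m Y.
Proof.
case=> S [hS hsum].
have : forall l, exists t : ('I_n1 -> H) * ('I_n2 -> H) * ('I_n3 -> H),
    forall i j k, S l i j k = t.1.1 i * t.1.2 j * t.2 k.
  by move=> l; case: (hS l) => _ [a [b [c h]]]; exists (a, b, c).
case/fin_all_exists => f hf.
exists (\matrix_(i, l) (f l).1.1 i), (fun j => \row_l (f l).1.2 j),
  (\matrix_(l, k) (f l).2 k) => j.
apply/matrixP => i k; rewrite mul_mx_diag !mxE hsum.
by apply: eq_bigr => l _; rewrite !mxE hf.
Qed.

Lemma sum_of_simple_of_slices n1 n2 n3 (T : tensor R n1 n2 n3) m
    (X : 'M[H]_(n1, m)) (d : 'I_n2 -> 'rV[H]_m) (Y : 'M[H]_(m, n3)) :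
  (forall j, frontal_slice T j = X *m diag_mx (d j) *m Y) ->
  (forall l, [/\ exists i, X i l != 0, exists j, d j 0 l != 0
                & exists k, Y l k != 0]) ->
  sum_of_simple T m.
Proof.
move=> hT hnz; exists (fun l i j k => X i l * d j 0 l * Y l k); split.
- move=> l; split; last by exists (X^~ l), (fun j => d j 0 l), (Y l).
  have [[i hi] [j hj] [k hk]] := hnz l; exists i, j, k.
  by apply/eqP => /qmul_eq0 [/qmul_eq0 [] | ] /eqP; apply/negP.
- move=> i j k; move/matrixP: (hT j) => /(_ i k).
  by rewrite mxE => ->; rewrite mxE; apply: eq_bigr => l _; rewrite mul_mx_diag mxE.
Qed.

Lemma sum_of_simple_lower_bound n1 n2 n3 (T : tensor R n1 n2 n3) m j1
    (B : 'M[H]_(n3, n1)) :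
  frontal_slice T j1 *m B = 1%:M -> sum_of_simple T m -> (n1 <= m)%N.
Proof.
move=> hB /slices_of_sum_of_simple [X [d [Y hXY]]].
by apply: (@right_inverse_dim _ _ _ X (diag_mx (d j1) *m Y *m B)); rewrite !mulmxA -hXY.
Qed.

(* Rank n forces simultaneous diagonalizability: slices A_j = X diag(d_j) Y
   with A_1 invertible and X square are diagonalized by P = X. *)
Lemma diagonalization_of_slices n p (A : 'I_p -> 'M[H]_n) j1 (A1inv : 'M[H]_n)
    (X Y : 'M[H]_n) (d : 'I_p -> 'rV[H]_n) :
  A j1 *m A1inv = 1%:M -> (forall j, A j = X *m diag_mx (d j) *m Y) ->
  exists P Pinv : 'M[H]_n, mx_inverse_of P Pinv /\
    forall j, is_diag_mx (Pinv *m (A j *m A1inv) *m P).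
Proof.
move=> hA1 hA; set Pinv := diag_mx (d j1) *m Y *m A1inv.
have hXP : X *m Pinv = 1%:M by rewrite /Pinv !mulmxA -hA hA1.
have hPX := mulmx1C_quat hXP.
set M := Y *m A1inv *m X.
have hMd : M *m diag_mx (d j1) = 1%:M.
  by apply: mulmx1C_quat; rewrite -hPX /Pinv /M !mulmxA.
have Mdiag := is_diag_of_mul_diag_eq1 (@qmul_eq0 R) hMd.
exists X, Pinv; split=> [|j]; first exact: (conj hXP hPX).
have -> : Pinv *m (A j *m A1inv) *m X = diag_mx (d j) *m M.
  by rewrite hA /M !mulmxA hPX mul1mx.
apply/is_diag_mxP => i k ik; rewrite mul_diag_mx mxE.
by rewrite (is_diag_mxP Mdiag) ?mulr0.
Qed.

(* Simultaneous diagonalization gives a decomposition into n simple tensors: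
   A_j = P D_j (P^{-1} A_1) with D_1 = 1. *)
Lemma sum_of_simple_of_diagonalization n p (T : tensor R n p n) j1
    (A1inv P Pinv : 'M[H]_n) :
  mx_inverse_of (frontal_slice T j1) A1inv -> mx_inverse_of P Pinv ->
  (forall j, j != j1 -> is_diag_mx (Pinv *m (frontal_slice T j *m A1inv) *m P)) ->
  sum_of_simple T n.
Proof.
move=> [hA1 hA1'] [hPPi hPiP] hdiag.
pose D j := Pinv *m (frontal_slice T j *m A1inv) *m P.
have hD1 : D j1 = 1%:M by rewrite /D hA1 mulmx1.
have hD j : D j = diag_mx (\row_l D j l l).
  apply: diag_mx_of_diag; have [->|/hdiag //] := eqVneq j j1.
  by rewrite hD1 scalar_mx_is_diag.
pose Q := Pinv *m frontal_slice T j1.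
have hQ : Q *m (A1inv *m P) = 1%:M by rewrite /Q !mulmxA -(mulmxA Pinv) hA1 mulmx1.
apply: (@sum_of_simple_of_slices _ _ _ _ _ P (fun j => \row_l D j l l) Q).
- move=> j; rewrite -hD /D /Q !mulmxA hPPi mul1mx.
  by rewrite -(mulmxA _ P Pinv) hPPi mulmx1 -mulmxA hA1' mulmx1.
- move=> l; split; [exact: col_neq0_of_left_inverse hPiP| |
    exact: row_neq0_of_right_inverse hQ].
  by exists j1; rewrite mxE hD1 mxE eqxx oner_neq0.
Qed.

End TensorRank.

Theorem mainTheorem3 (R : realType) (n p : nat) (hp : (0 < p)%N)
    (T : tensor R n p n) (A1inv : 'M[quat R]_n)
    (hinv : mx_inverse_of (frontal_slice T (Ordinal hp)) A1inv) :
  tensor_rank_is T n <->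
  exists P Pinv : 'M[quat R]_n,
    mx_inverse_of P Pinv /\
    forall j : 'I_p, j != Ordinal hp ->
      is_diag_mx (Pinv *m (frontal_slice T j *m A1inv) *m P).
Proof.
split.
- case=> /slices_of_sum_of_simple [X [d [Y hXY]]] _.
  have [P [Pinv [hP hdiag]]] := diagonalization_of_slices hinv.1 hXY.
  by exists P, Pinv; split=> [|j _]; [exact: hP | exact: hdiag].
- case=> P [Pinv [hP hdiag]]; split.
  + exact: sum_of_simple_of_diagonalization hinv hP hdiag.
  + move=> m mn /(sum_of_simple_lower_bound hinv.1).
    by rewrite leqNgt mn.
Qed.
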